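(* Fix $d\ge0$ and for a unit vector $z\in\mathbb{S}^{n-1}$ let $\mathrm{slab}_z(x)=\mathbf{1}[-d\le z\cdot x\le d]$. If $z,z'\in\mathbb{S}^{n-1}$ satisfy $0<\|z-z'\|_2\le 1/3$, then \[ \Pr_{\mathbf{x}\sim N(0,I_n)}[\mathrm{slab}_z(\mathbf{x})\ne\mathrm{slab}_{z'}(\mathbf{x})]\le 5\|z-z'\|_2\sqrt{\ln\!\Big(\frac{1}{\|z-z'\|_2}\Big)} . \]
   Context: $N(0,I_n)$ is the standard Gaussian distribution on $\mathbb{R}^n$. *)

From HB Require Import structures.
From mathcomp Require Import all_boot all_order all_algebra.
From mathcomp Require Import all_classical all_reals all_analysis.
Set Implicit Arguments. Unset Strict Implicit. Unset Printing Implicit Defensive.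
Import Order.TTheory GRing.Theory Num.Theory.
Local Open Scope classical_set_scope.
Local Open Scope ring_scope.

Definition vcons (R : realType) (n : nat) (t : R) (v : 'rV[R]_n) : 'rV[R]_n.+1 :=
  \row_(i < n.+1) (if unlift ord0 i is Some j then v 0 j else t).

(* Expectation of a nonnegative extended-real function under N(0, I_n),
   as the iterated integral against the standard normal law on each
   coordinate (product measure N(0,1)^{\otimes n}). *)
Fixpoint gauss_expect (R : realType) (n : nat) : ('rV[R]_n -> \bar R) -> \bar R :=
  match n with
  | 0 => fun f => f 0
  | m.+1 => fun f =>
      (\int[normal_prob (0:R) 1]_t gauss_expect (fun v : 'rV[R]_m => f (vcons t v)))%E
  end.

Definition gauss_prob (R : realType) (n : nat) (A : set 'rV[R]_n) : \bar R :=
  gauss_expect (fun x => (\1_A x)%:E).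

Definition dotv (R : realType) (n : nat) (u v : 'rV[R]_n) : R :=
  \sum_(i < n) u 0 i * v 0 i.

Definition norm2 (R : realType) (n : nat) (u : 'rV[R]_n) : R :=
  Num.sqrt (dotv u u).

Definition slab (R : realType) (n : nat) (d : R) (z x : 'rV[R]_n) : bool :=
  (- d <= dotv z x) && (dotv z x <= d).

From HB Require Import structures.
From mathcomp Require Import all_boot all_order all_algebra.
From mathcomp Require Import all_classical all_reals all_analysis.
From mathcomp Require Import measurable_realfun ring lra.
Set Implicit Arguments. Unset Strict Implicit. Unset Printing Implicit Defensive.
Import Order.TTheory GRing.Theory Num.Theory.
Local Open Scope classical_set_scope.
Local Open Scope ring_scope.

(* Write u = z.x, u' = z'.x and eps = ||z - z'||.  If the slabs disagree at x,
   then |u - d| or |u + d| is at most |u - u'|, so the indicator of the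
   disagreement set is dominated by the sum of the two tilts
   exp(p((u - u')^2 - (u -/+ d)^2)/2), p := 1/(2 eps^2).  The Gaussian moment of
   exp(p((c2 + v.x)^2 - (c1 + w.x)^2)/2) has a closed form, obtained by
   integrating out one coordinate at a time and completing the square; its
   determinant factor is det(I + p w w^T - p v v^T).  For our tilts each moment
   is at most 2 eps, and 4 eps <= 5 eps sqrt(ln(1/eps)) because
   ln(1/eps) >= 1 - eps >= 2/3. *)

Section normal_integral.
Context {R : realType}.
Local Notation mu := (@lebesgue_measure R).

Lemma integral_normal_prob (m s : R) (f : R -> \bar R) :
  (forall x, 0 <= f x)%E -> measurable_fun [set: R] f ->
  (\int[normal_prob m s]_x f x = \int[mu]_x (f x * (normal_pdf m s x)%:E))%E.
Proof.
move=> f0 mf; have dom := normal_prob_dominates m s.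
rewrite -(Radon_Nikodym_SigmaFinite.change_of_variables dom)//.
have mpdf : measurable_fun [set: R] (EFin \o normal_pdf m s).
  by apply/measurable_EFinP; exact: measurable_normal_pdf.
apply: ae_eq_integral => //.
- apply: emeasurable_funM => //; apply: measurable_int.
  exact: Radon_Nikodym_SigmaFinite.f_integrable.
- exact: emeasurable_funM.
- apply: ae_eqe_mul2l; apply: integral_ae_eq => //.
  + exact: Radon_Nikodym_SigmaFinite.f_integrable.
  + by move=> E _ mE; rewrite -Radon_Nikodym_SigmaFinite.f_integral.
Qed.

Lemma normal_peakV (r : R) : 0 < r -> normal_peak r^-1 = r * normal_peak 1.
Proof.
move=> r0; rewrite /normal_peak expr1n mul1r exprVn.
rewrite -mulrnAr sqrtrM ?invr_ge0 ?exprn_ge0 ?ltW// sqrtrV ?exprn_ge0 ?ltW//.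
by rewrite sqrtr_sqr gtr0_norm// invfM invrK.
Qed.

Lemma measurable_expR_quadratic (K P Q C : R) :
  measurable_fun [set: R]
    (fun t => (K * expR (- (P * t ^+ 2 + 2 * Q * t + C) / 2))%:E).
Proof.
apply/measurable_EFinP; apply: measurable_funM => //.
apply: measurableT_comp => //; apply: measurable_funM => //.
apply: measurableT_comp => //.
apply: measurable_funD => //; apply: measurable_funD => //.
by apply: measurable_funM => //; exact: measurable_funX.
Qed.

(* The integrand is a constant multiple of the density of
   N(- Q / (1 + P), 1 / (1 + P)). *)
Lemma integral_normal_expR_quadratic (K P Q C : R) : 0 <= K -> 0 < 1 + P ->
  (\int[normal_prob 0 1]_t (K * expR (- (P * t ^+ 2 + 2 * Q * t + C) / 2))%:E =
   (K / Num.sqrt (1 + P) * expR (- (C - Q ^+ 2 / (1 + P)) / 2))%:E)%E.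
Proof.
move=> K0 P1; rewrite integral_normal_prob; last 2 first.
- by move=> t; rewrite lee_fin mulr_ge0 ?expR_ge0.
- exact: measurable_expR_quadratic.
set r := Num.sqrt (1 + P).
have r0 : 0 < r by rewrite sqrtr_gt0.
have r2 : r ^+ 2 = 1 + P by rewrite sqr_sqrtr ?ltW.
set K' := K / r * expR (- (C - Q ^+ 2 / (1 + P)) / 2).
transitivity (\int[mu]_t (K'%:E * (normal_pdf (- Q / (1 + P)) r^-1 t)%:E))%E.
  apply: eq_integral => t _; rewrite -!EFinM; congr EFin.
  rewrite !normal_pdfE ?oner_neq0 ?invr_eq0 ?gt_eqF// normal_peakV// /normal_fun.
  have P_neq0 : 1 + P != 0 by rewrite gt_eqF.
  have r_neq0 : r != 0 by rewrite gt_eqF.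
  have complete_square :
      - (P * t ^+ 2 + 2 * Q * t + C) / 2 + - (t - 0) ^+ 2 / (1 ^+ 2 *+ 2) =
      - (C - Q ^+ 2 / (1 + P)) / 2 + - (t - - Q / (1 + P)) ^+ 2 / (r^-1 ^+ 2 *+ 2).
    by rewrite exprVn r2 expr1n; field.
  transitivity (K * normal_peak 1 *
    expR (- (P * t ^+ 2 + 2 * Q * t + C) / 2 + - (t - 0) ^+ 2 / (1 ^+ 2 *+ 2))).
    by rewrite expRD; ring.
  by rewrite complete_square expRD /K'; field.
rewrite integralZl//; last exact: integrable_normal_pdf.
by rewrite integral_normal_pdf mule1.
Qed.

End normal_integral.

Section row_vectors.
Context {R : realType}.

Definition rbehead n (w : 'rV[R]_n.+1) : 'rV[R]_n := \row_j w 0 (lift ord0 j).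

Lemma dotv_recl n (u v : 'rV[R]_n.+1) :
  dotv u v = u 0 ord0 * v 0 ord0 + dotv (rbehead u) (rbehead v).
Proof.
rewrite /dotv big_ord_recl; congr (_ + _).
by apply: eq_bigr => i _; rewrite !mxE.
Qed.

Lemma vcons_head n t (x : 'rV[R]_n) : vcons t x 0 ord0 = t.
Proof. by rewrite mxE unlift_none. Qed.

Lemma rbehead_vcons n t (x : 'rV[R]_n) : rbehead (vcons t x) = x.
Proof. by apply/rowP => j; rewrite !mxE liftK. Qed.

Lemma dotv_vcons n (w : 'rV[R]_n.+1) t x :
  dotv w (vcons t x) = w 0 ord0 * t + dotv (rbehead w) x.
Proof. by rewrite dotv_recl vcons_head rbehead_vcons. Qed.

Lemma dotv_rV0 (u v : 'rV[R]_0) : dotv u v = 0.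
Proof. by rewrite /dotv big_ord0. Qed.

Lemma dotvv_ge0 n (u : 'rV[R]_n) : 0 <= dotv u u.
Proof. by apply: sumr_ge0 => i _; rewrite -expr2 sqr_ge0. Qed.

Lemma dotvv_rbehead_le n (u : 'rV[R]_n.+1) :
  dotv (rbehead u) (rbehead u) <= dotv u u.
Proof. by rewrite [leRHS]dotv_recl lerDr -expr2 sqr_ge0. Qed.

Lemma dotvBl n (u u' x : 'rV[R]_n) : dotv (u - u') x = dotv u x - dotv u' x.
Proof. by rewrite /dotv -sumrB; apply: eq_bigr => i _; rewrite !mxE mulrBl. Qed.

Lemma sqr_norm2 n (u : 'rV[R]_n) : norm2 u ^+ 2 = dotv u u.
Proof. by rewrite sqr_sqrtr ?dotvv_ge0. Qed.

End row_vectors.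

Section gauss_expect.
Context {R : realType}.
Local Open Scope ereal_scope.

Lemma gauss_expect_ge0 n (f : 'rV[R]_n -> \bar R) :
  (forall x, 0 <= f x) -> 0 <= gauss_expect f.
Proof.
elim: n f => [|n IH] f f0 /=; first exact: f0.
by apply: integral_ge0 => t _; apply: IH.
Qed.

(* No measurability is needed: a nonnegative integral is a supremum over the
   simple functions below the integrand. *)
Lemma le_gauss_expect n (f g : 'rV[R]_n -> \bar R) :
  (forall x, 0 <= f x) -> (forall x, f x <= g x) ->
  gauss_expect f <= gauss_expect g.
Proof.
elim: n f g => [|n IH] f g f0 fg /=; first exact: fg.
have g0 x : 0 <= g x by apply: le_trans (fg x).
rewrite !ge0_integralTE => [|t|t]; try exact: gauss_expect_ge0.
apply: ereal_sup_le => _ [h /= hf <-]; exists h => //= t.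
by apply: le_trans (hf t) _; apply: IH.
Qed.

End gauss_expect.

Section gaussian_tilt.
Context {R : realType}.
Variable p : R.
Hypothesis p_ge0 : 0 <= p.

Definition qexp n (w v : 'rV[R]_n) (c1 c2 : R) (x : 'rV[R]_n) : R :=
  expR (p * ((c2 + dotv v x) ^+ 2 - (c1 + dotv w x) ^+ 2) / 2).

(* With a = w.w, b = w.v and e = v.v, qdet is det(I + p w w^T - p v v^T) and
   qmoment is the Gaussian moment of qexp w v c1 c2. *)
Definition qdet (a b e : R) : R := (1 + p * a) * (1 - p * e) + (p * b) ^+ 2.

Definition qform (a b e c1 c2 d1 d2 : R) : R :=
  p * ((1 - p * e) * c1 * d1 + p * b * (c1 * d2 + c2 * d1)
       - (1 + p * a) * c2 * d2) / qdet a b e.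

Definition qmoment (a b e c1 c2 : R) : R :=
  (Num.sqrt (qdet a b e))^-1 * expR (- qform a b e c1 c2 c1 c2 / 2).

Lemma qexp_rV0 (w v x : 'rV[R]_0) c1 c2 : qexp w v c1 c2 x = qmoment 0 0 0 c1 c2.
Proof.
have qdet0 : qdet 0 0 0 = 1 by rewrite /qdet; ring.
rewrite /qexp /qmoment /qform !dotv_rV0 qdet0 sqrtr1 invr1 mul1r.
by congr expR; ring.
Qed.

Lemma qexp_vcons n (w v : 'rV[R]_n.+1) c1 c2 t x :
  qexp w v c1 c2 (vcons t x) =
  qexp (rbehead w) (rbehead v) (c1 + w 0 ord0 * t) (c2 + v 0 ord0 * t) x.
Proof. by rewrite /qexp !dotv_vcons !addrA. Qed.

Lemma qdet_gt0 a b e : 0 <= a -> p * e < 1 -> 0 < qdet a b e.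
Proof.
move=> a0 pe; apply: ltr_wpDr; first exact: sqr_ge0.
by rewrite mulr_gt0 ?subr_gt0// ltr_wpDr ?mulr_ge0.
Qed.

Lemma qform_shift a b e w0 v0 c1 c2 t :
  qform a b e (c1 + w0 * t) (c2 + v0 * t) (c1 + w0 * t) (c2 + v0 * t) =
  qform a b e w0 v0 w0 v0 * t ^+ 2 + 2 * qform a b e w0 v0 c1 c2 * t
  + qform a b e c1 c2 c1 c2.
Proof. by rewrite /qform; ring. Qed.

Lemma qdet_rank1 a b e w0 v0 : qdet a b e != 0 ->
  qdet a b e * (1 + qform a b e w0 v0 w0 v0) =
  qdet (a + w0 ^+ 2) (b + w0 * v0) (e + v0 ^+ 2).
Proof. by rewrite /qform /qdet => D0; field. Qed.

Lemma qform_rank1 a b e w0 v0 c1 c2 :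
  qdet a b e != 0 -> qdet (a + w0 ^+ 2) (b + w0 * v0) (e + v0 ^+ 2) != 0 ->
  qform a b e c1 c2 c1 c2
  - qform a b e w0 v0 c1 c2 ^+ 2 / (1 + qform a b e w0 v0 w0 v0) =
  qform (a + w0 ^+ 2) (b + w0 * v0) (e + v0 ^+ 2) c1 c2 c1 c2.
Proof.
by rewrite /qform /qdet => D0 D1; field; rewrite D0 D1.
Qed.

Lemma gauss_expect_sum_qexp n (I : Type) (s : seq I) (w v : 'rV[R]_n)
    (c1 c2 : I -> R) : p * dotv v v < 1 ->
  gauss_expect (fun x => (\sum_(i <- s) qexp w v (c1 i) (c2 i) x)%:E) =
  (\sum_(i <- s) qmoment (dotv w w) (dotv w v) (dotv v v) (c1 i) (c2 i))%:E.
Proof.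
elim: n w v c1 c2 => [|n IH] w v c1 c2 pv.
  by congr EFin; apply: eq_bigr => i _; rewrite qexp_rV0 !dotv_rV0.
set w0 := w 0 ord0; set v0 := v 0 ord0.
set a := dotv (rbehead w) (rbehead w); set b := dotv (rbehead w) (rbehead v).
set e := dotv (rbehead v) (rbehead v).
have -> : dotv w w = a + w0 ^+ 2 by rewrite dotv_recl addrC expr2.
have -> : dotv w v = b + w0 * v0 by rewrite dotv_recl addrC.
have ev : dotv v v = e + v0 ^+ 2 by rewrite dotv_recl addrC expr2.
rewrite ev.
have a0 : 0 <= a := dotvv_ge0 _.
have pe : p * e < 1.
  by apply: le_lt_trans pv; rewrite ler_wpM2l// dotvv_rbehead_le.
have D0 : 0 < qdet a b e by exact: qdet_gt0.
have D1 : 0 < qdet (a + w0 ^+ 2) (b + w0 * v0) (e + v0 ^+ 2).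
  by apply: qdet_gt0; rewrite ?addr_ge0 ?sqr_ge0 -?ev.
set P := qform a b e w0 v0 w0 v0.
have P1 : 0 < 1 + P.
  by rewrite -(pmulr_rgt0 _ D0) /P qdet_rank1 ?gt_eqF.
set K := (Num.sqrt (qdet a b e))^-1.
have K0 : 0 <= K by rewrite invr_ge0 sqrtr_ge0.
have section_moment t :
    gauss_expect (fun x =>
      (\sum_(i <- s) qexp w v (c1 i) (c2 i) (vcons t x))%:E) =
    \sum_(i <- s) (K * expR (- (P * t ^+ 2 + 2 * qform a b e w0 v0 (c1 i) (c2 i) * t
                              + qform a b e (c1 i) (c2 i) (c1 i) (c2 i)) / 2))%:E.
  transitivity (gauss_expect (fun x => (\sum_(i <- s) qexp (rbehead w) (rbehead v)
                                     (c1 i + w0 * t) (c2 i + v0 * t) x)%:E)).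
    congr gauss_expect; apply/funext => x; congr EFin.
    by apply: eq_bigr => i _; rewrite qexp_vcons.
  by rewrite IH// -sumEFin; apply: eq_bigr => i _; rewrite /qmoment qform_shift.
rewrite /=; under eq_integral => t _ do rewrite section_moment.
rewrite ge0_integral_sum//; last 2 first.
- by move=> i; exact: measurable_expR_quadratic.
- by move=> i t _; rewrite lee_fin mulr_ge0 ?expR_ge0.
rewrite -sumEFin; apply: eq_bigr => i _.
rewrite integral_normal_expR_quadratic// /P qform_rank1 ?gt_eqF//.
by rewrite /qmoment /K -qdet_rank1 ?gt_eqF// sqrtrM ?ltW// invfM.
Qed.

Lemma qmoment_le a b e c : 0 <= a -> p * e < 1 ->
  qmoment a b e c 0 <= (Num.sqrt ((1 + p * a) * (1 - p * e)))^-1.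
Proof.
move=> a0 pe; have D0 := qdet_gt0 b a0 pe.
have X0 : 0 < (1 + p * a) * (1 - p * e).
  by rewrite mulr_gt0 ?subr_gt0// ltr_wpDr ?mulr_ge0.
rewrite /qmoment -[leRHS]mulr1 ler_pM ?invr_ge0 ?sqrtr_ge0 ?expR_ge0//.
  rewrite lef_pV2 ?posrE ?sqrtr_gt0// ler_wsqrtr// /qdet lerDl.
  exact: sqr_ge0.
have q0 : 0 <= qform a b e c 0 c 0.
  rewrite /qform !(mulr0, mul0r, addr0, subr0) -(mulrA (1 - p * e)) -expr2.
  apply: divr_ge0; last exact: ltW.
  by rewrite mulr_ge0 // mulr_ge0 ?sqr_ge0 // subr_ge0 ltW.
by rewrite expR_le1 mulNr oppr_le0 divr_ge0.
Qed.

End gaussian_tilt.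

Section slab_disagreement.
Context {R : realType}.

Lemma slab_neq_sqr (d u u' : R) :
  ((- d <= u) && (u <= d)) != ((- d <= u') && (u' <= d)) ->
  (u - d) ^+ 2 <= (u - u') ^+ 2 \/ (u + d) ^+ 2 <= (u - u') ^+ 2.
Proof.
by case: (lerP (- d) u) => ?; case: (lerP u d) => ?;
   case: (lerP (- d) u') => ?; case: (lerP u' d) => ? //= _;
   first [left; nra | right; nra].
Qed.

Lemma indic_slab_neq_le n (p d : R) (z z' x : 'rV[R]_n) : 0 <= p ->
  \1_[set x | slab d z x != slab d z' x] x <=
  qexp p z (z - z') (- d) 0 x + qexp p z (z - z') d 0 x.
Proof.
move=> p0; rewrite indicE.
have one_le_qexp c : (c + dotv z x) ^+ 2 <= (dotv (z - z') x) ^+ 2 ->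
    1 <= qexp p z (z - z') c 0 x.
  move=> h; rewrite /qexp -expR0 ler_expR add0r.
  by rewrite divr_ge0// mulr_ge0// subr_ge0.
have qexp_ge0 c : 0 <= qexp p z (z - z') c 0 x by exact: expR_ge0.
case: (boolP (x \in _)) => [/set_mem /slab_neq_sqr [] h|_].
- apply: le_trans (one_le_qexp (- d) _) _; first by rewrite dotvBl (addrC (- d)).
  by rewrite lerDl.
- apply: le_trans (one_le_qexp d _) _; first by rewrite dotvBl (addrC d).
  by rewrite lerDr.
- by rewrite addr_ge0.
Qed.

End slab_disagreement.

Section real_bounds.
Context {R : realType}.

Lemma ln_inv_ge (x : R) : 0 < x -> 1 - x <= ln x^-1.
Proof.
move=> x0; rewrite lnV ?posrE// lerNr opprB.
have x1 : -1 < x - 1 by lra.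
by have := le_ln1Dx x1; rewrite (addrC 1) subrK.
Qed.

Lemma invr_sqrt_le (c y : R) : 0 < c -> (c ^+ 2)^-1 <= y -> (Num.sqrt y)^-1 <= c.
Proof.
move=> c0 cy; have y0 : 0 < y by apply: lt_le_trans cy; rewrite invr_gt0 exprn_gt0.
rewrite -[leRHS]invrK lef_pV2 ?posrE ?invr_gt0 ?sqrtr_gt0//.
by rewrite -[leLHS]gtr0_norm ?invr_gt0// -sqrtr_sqr exprVn ler_wsqrtr.
Qed.

End real_bounds.

Theorem claim6p4 (R : realType) (n : nat) (d : R) (z z' : 'rV[R]_n) :
  0 <= d ->
  norm2 z = 1 -> norm2 z' = 1 ->
  0 < norm2 (z - z') -> norm2 (z - z') <= 3^-1 ->
  (gauss_prob [set x | slab d z x != slab d z' x]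
   <= (5 * norm2 (z - z') * Num.sqrt (ln (1 / norm2 (z - z'))))%:E)%E.
Proof.
move=> _ nz _ eps_gt0 eps_le; set eps := norm2 (z - z') in eps_gt0 eps_le *.
have zz : dotv z z = 1 by rewrite -sqr_norm2 nz expr1n.
have vv : dotv (z - z') (z - z') = eps ^+ 2 by rewrite sqr_norm2.
set p := (2 * eps ^+ 2)^-1.
have p0 : 0 <= p by rewrite invr_ge0 mulr_ge0 ?sqr_ge0.
have pe : p * eps ^+ 2 = 2^-1 by rewrite /p; field; rewrite gt_eqF.
have pe_lt1 : p * eps ^+ 2 < 1 by rewrite pe invf_lt1 ?ltr1n.
have moment_le c : qmoment p 1 (dotv z (z - z')) (eps ^+ 2) c 0 <= 2 * eps.
  apply: le_trans (qmoment_le p0 _ _ ler01 pe_lt1) _.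
  apply: invr_sqrt_le; first by rewrite mulr_gt0.
  have -> : ((2 * eps) ^+ 2)^-1 = p / 2 by rewrite /p; field; rewrite gt_eqF.
  by rewrite mulr1 pe; lra.
have ln_ge : 4 / 5 <= Num.sqrt (ln (1 / eps)).
  have -> : 4 / 5 = Num.sqrt ((4 / 5) ^+ 2) :> R by rewrite sqrtr_sqr ger0_norm.
  rewrite ler_wsqrtr// div1r; apply: le_trans (ln_inv_ge eps_gt0).
  by rewrite expr2; lra.
apply: le_trans (le_gauss_expect (g := fun x =>
  (\sum_(c <- [:: - d; d]) qexp p z (z - z') c 0 x)%:E) _ _) _.
- by move=> x; rewrite lee_fin indicE.
- by move=> x; rewrite lee_fin !big_cons big_nil addr0 indic_slab_neq_le.
rewrite gauss_expect_sum_qexp ?vv// zz lee_fin.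
rewrite !big_cons big_nil addr0.
apply: le_trans (lerD (moment_le _) (moment_le _)) _.
by nra.
Qed.
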